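(* For $n\geqslant 3$ let $M_n$ be the maximum, over all pairs $(G,S)$ of caterpillar trees with $n$ leaves bijectively labeled by the same label set and with $G$ and $S$ of different labeled topologies, of the number of coalescent histories for $(G,S)$. Then $M_n\sim C_{n-1}$ as $n\to\infty$, where $C_m=\frac{1}{m+1}\binom{2m}{m}$.
   Context: All trees are binary, rooted, leaf-labeled. A caterpillar tree is one in which some internal node is descended from all other internal nodes. For a caterpillar with $n$ leaves, internal nodes are numbered $1,\dots,n-1$ from the cherry (internal node with exactly two descendant leaves) to the root, and internal edge $i$ is the edge immediately above node $i$, with an extra edge $n-1$ above the root. A coalescent history for a gene tree $G$ and species tree $S$ is a map $h$ from internal nodes of $G$ to internal edges of $S$ such that (1) every label of a leaf below node $v$ of $G$ labels a leaf of $S$ below edge $h(v)$, and (2) if $v_2$ is descended from $v_1$ in $G$ then $h(v_2)$ is descended from $h(v_1)$ in $S$ (objects are descended from themselves). $a_n\sim b_n$ means $a_n/b_n\to 1$. *)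

From HB Require Import structures.
From mathcomp Require Import all_boot all_order all_algebra all_fingroup.
From mathcomp Require Import all_classical all_reals all_analysis.
Set Implicit Arguments. Unset Strict Implicit. Unset Printing Implicit Defensive.
Import Order.TTheory GRing.Theory Num.Theory.

(* A caterpillar with n leaves labeled by 'I_n is encoded by a permutation
   s : {perm 'I_n}: leaves s 0, s 1 form the cherry, and internal node k
   (1 <= k <= n-1, numbered from the cherry to the root) has as descendant
   leaves exactly {s 0, ..., s k}.  Every labeled caterpillar arises this way. *)

(* leaf set below internal node k (equivalently below internal edge k) *)
Definition clade (n : nat) (s : {perm 'I_n}) (k : nat) : {set 'I_n} :=
  [set s j | j : 'I_n & (j <= k)%N].

(* two caterpillars have the same labeled topology iff they have the same
   clades at every internal node *)
Definition same_topology (n : nat) (g s : {perm 'I_n}) : bool :=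
  [forall k : 'I_n, (1 <= k)%N ==> (clade g k == clade s k)].

(* Coalescent histories.  Internal nodes of G and internal edges of S are
   numbered 1..n-1; an element i : 'I_n.-1 stands for number i+1. *)
Definition is_history (n : nat) (g s : {perm 'I_n})
    (h : {ffun 'I_n.-1 -> 'I_n.-1}) : bool :=
  [forall i : 'I_n.-1, clade g i.+1 \subset clade s (h i).+1] &&
  [forall i1 : 'I_n.-1, forall i2 : 'I_n.-1,
      (i2 <= i1)%N ==> (h i2 <= h i1)%N].

Definition num_histories (n : nat) (g s : {perm 'I_n}) : nat :=
  #|[set h : {ffun 'I_n.-1 -> 'I_n.-1} | is_history g s h]|.

Definition M (n : nat) : nat :=
  \max_(p : {perm 'I_n} * {perm 'I_n} | ~~ same_topology p.1 p.2)
     num_histories p.1 p.2.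

Definition catalan {R : realType} (m : nat) : R :=
  ('C(m.*2, m))%:R / (m.+1)%:R.

(* Comparing clade sizes shows that a coalescent history of two caterpillars
   is a nondecreasing map h on the internal nodes 1..n-1 with h(i) >= i; when
   G = S every such map is a history.  These maps are counted by ballot
   numbers, there are C_(n-1) of them, hence M_n <= C_(n-1).  Conversely, let
   G be S with the leaves entering S at nodes a+1 and a+2 exchanged: every map
   with h(a+1) > a+1 is still a history, and the maps with h(a+1) = a+1 split
   into independent maps below and above node a+1, at most C_(a+1) C_(n-2-a)
   of them.  Taking a+1 close to (n-1)/2, the estimates binom(2J,J) <= 4^J and
   16^J <= 4J binom(2J,J)^2 give C_q C_u / C_(q+u) <= 8 / sqrt(q+u+1), so
   M_n / C_(n-1) -> 1. *)

From HB Require Import structures.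
From mathcomp Require Import all_boot all_order all_algebra all_fingroup.
From mathcomp Require Import all_classical all_reals all_analysis.
From mathcomp Require Import zify ring lra.
Set Implicit Arguments. Unset Strict Implicit. Unset Printing Implicit Defensive.
Import Order.TTheory GRing.Theory Num.Theory.
Import numFieldNormedType.Exports.

Local Open Scope nat_scope.

Definition ballot (j w : nat) : int :=
  ('C(w + j + 1, j)%:Z - (if j is j'.+1 then 'C(w + j + 1, j') else 0)%:Z)%R.

Lemma ballotS j w : j <= w ->
  ballot j.+1 w = (ballot j w + (if (j < w)%N then ballot j.+1 w.-1 else 0))%R.
Proof.
move=> le_jw; rewrite /ballot; case: ltnP => [lt_jw | le_wj].
  case: w lt_jw {le_jw} => [|w] // lt_jw /=.
  have -> : w.+1 + j.+1 + 1 = (w + j.+1 + 1).+1 by lia.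
  have -> : w.+1 + j + 1 = w + j.+1 + 1 by lia.
  by rewrite binS; case: j {lt_jw} => [|j]; rewrite ?bin0 ?binS; lia.
have -> : w = j by lia.
rewrite (_ : j + j.+1 + 1 = (j + j + 1).+1) ?binS; last by lia.
have -> : 'C(j + j + 1, j.+1) = 'C(j + j + 1, j).
  by rewrite -[RHS]bin_sub; [congr binomial|]; lia.
case: j {le_jw le_wj} => [|j]; rewrite ?bin0 ?binS; lia.
Qed.

Section BallotMaps.
Variable p : nat.
Local Notation m := p.+1.
Local Notation T := {ffun 'I_m -> 'I_m}.

Definition nondecr (h : T) : bool :=
  [forall i1 : 'I_m, forall i2 : 'I_m, (i2 <= i1) ==> (h i2 <= h i1)].

Lemma nondecrP (h : T) : reflect {homo h : i j / i <= j} (nondecr h).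
Proof.
apply: (iffP forallP) => [h_mono i j le_ij | h_mono i].
  by move/forallP: (h_mono j) => /(_ i) /implyP; apply.
by apply/forallP => j; apply/implyP; exact: h_mono.
Qed.

(* The constant tail on [k, p] lets maps defined on a prefix live in one
   finType; every coalescent history lies in ballot_maps 0 p.+1 p. *)
Definition ballot_maps (c k v : nat) : {set T} := [set h : T | [&& nondecr h,
  [forall i : 'I_m, (i < c) ==> (h i == i :> nat)],
  [forall i : 'I_m, (c <= i < k) ==> (i <= h i <= v)] &
  [forall i : 'I_m, (k <= i) ==> (h i == p :> nat)]]].

Lemma ballot_mapsP (h : T) c k v : reflect
  [/\ {homo h : i j / i <= j},
      forall i : 'I_m, i < c -> h i = i :> nat,
      forall i : 'I_m, c <= i < k -> i <= h i <= v &
      forall i : 'I_m, k <= i -> h i = p :> nat]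
  (h \in ballot_maps c k v).
Proof.
rewrite inE; apply: (iffP and4P).
  case=> /nondecrP h_mono /forallP h_fix /forallP h_mid /forallP h_top.
  split=> // i; first by move/(implyP (h_fix i))/eqP.
    exact: implyP (h_mid i).
  by move/(implyP (h_top i))/eqP.
case=> h_mono h_fix h_mid h_top; split; first exact/nondecrP.
- by apply/forallP => i; apply/implyP => /h_fix ->.
- by apply/forallP => i; apply/implyP => /h_mid.
- by apply/forallP => i; apply/implyP => /h_top ->.
Qed.

Lemma ord_le_max (i : 'I_m) : i <= p. Proof. by rewrite -ltnS. Qed.

Lemma card_ballot_maps0 c v : #|ballot_maps c c v| = 1.
Proof.
pose h0 : T := [ffun i : 'I_m => if i < c then i else ord_max].
apply/eqP/cards1P; exists h0; apply/setP => h; rewrite inE; apply/idP/eqP.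
  case/ballot_mapsP => _ h_fix _ h_top; apply/ffunP => i; apply: val_inj.
  by rewrite ffunE; case: ltnP => /= [/h_fix | /h_top].
move=> ->; apply/ballot_mapsP; split=> [i j le_ij|i|i|i]; rewrite !ffunE.
- by have := ltn_ord j; case: (ltnP i c); case: (ltnP j c) => /= *; lia.
- by move->.
- lia.
- by rewrite ltnNge => ->.
Qed.

Section Recursion.
Variables (c k v : nat).
Hypotheses (lt_km : k < m) (le_ck : c <= k) (le_kv : k <= v) (lt_vm : v < m).
Let kk : 'I_m := Ordinal lt_km.
Local Notation top_at_k := [set h : T | h kk == v :> nat].

Lemma card_ballot_maps_at_top :
  #|ballot_maps c k.+1 v :&: top_at_k| = #|ballot_maps c k v|.
Proof.
pose set_k (y : 'I_m) (h : T) : T := [ffun i : 'I_m => if i == k :> nat then y else h i].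
have set_kK (y y' : 'I_m) (h : T) : h kk = y' :> nat -> set_k y' (set_k y h) = h.
  move=> hk; apply/ffunP => i; rewrite !ffunE; case: eqP => // ik.
  have -> : i = kk by exact: val_inj.
  by apply: val_inj; exact: esym hk.
rewrite -(card_in_imset (f := set_k ord_max)); last first.
  move=> h1 h2 /finset.setIP[_ h1k] /finset.setIP[_ h2k].
  rewrite !inE in h1k h2k => /(congr1 (set_k (Ordinal lt_vm))).
  by rewrite !set_kK ?(eqP h1k) ?(eqP h2k).
apply: eq_card => h; apply/imsetP/idP => [[h' /finset.setIP[h'S _] ->] | hS].
  case/ballot_mapsP: h'S => h'_mono h'_fix h'_mid h'_top.
  apply/ballot_mapsP; split=> [i j le_ij|i lt_ic|i /andP[le_ci lt_ik]|i le_ki]; rewrite !ffunE.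
  - case: eqP => ik; case: eqP => jk //=.
    + by rewrite h'_top //; lia.
    + exact: ord_le_max.
    + exact: h'_mono.
  - by case: eqP => [|_]; [lia | exact: h'_fix].
  - by case: eqP => [|_]; [lia | apply: h'_mid; lia].
  - by case: eqP => // ik; apply: h'_top; lia.
case/ballot_mapsP: hS => h_mono h_fix h_mid h_top.
exists (set_k (Ordinal lt_vm) h); last by rewrite set_kK // h_top.
apply/finset.setIP; split; last by rewrite inE ffunE eqxx.
apply/ballot_mapsP.
split=> [i j le_ij|i lt_ic|i /andP[le_ci lt_ik]|i le_ki]; rewrite !ffunE.
- case: eqP => ik; case: eqP => jk //=.
  + by rewrite h_top //; lia.
  + case: (ltnP i c) => [/h_fix|le_ci]; first lia.
    by have := h_mid i; lia.
  + exact: h_mono.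
- by case: eqP => [|_]; [lia | exact: h_fix].
- by case: eqP => [ik|ik] /=; [rewrite leqnn andbT; lia | apply: h_mid; lia].
- by case: eqP => [|_]; [lia | apply: h_top; lia].
Qed.

Lemma card_ballot_maps_below_top :
  #|ballot_maps c k.+1 v :\: top_at_k| =
    if k < v then #|ballot_maps c k.+1 v.-1| else 0.
Proof.
have kkE : kk = k :> nat by [].
case: ltnP => [lt_kv | le_vk]; last first.
  apply/eqP; rewrite cards_eq0; apply/eqP/setP => h; rewrite finset.in_set0.
  apply/negbTE/finset.setDP => -[/ballot_mapsP[_ _ h_mid _] /[!inE] ne_hk_v].
  by have := h_mid kk; lia.
apply: eq_card => h; apply/finset.setDP/ballot_mapsP.
  case=> /ballot_mapsP[h_mono h_fix h_mid h_top] /[!inE] ne_hk_v.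
  split=> // i /andP[le_ci lt_ik].
  by have := h_mid i; have := h_mid kk; have := h_mono i kk; lia.
case=> h_mono h_fix h_mid h_top; split; last by rewrite inE; have := h_mid kk; lia.
by apply/ballot_mapsP; split=> // i /andP[le_ci lt_ik]; have := h_mid i; lia.
Qed.

End Recursion.

Lemma card_ballot_maps c j w : c + j <= m -> j <= w.+1 -> c + w <= p ->
  Posz #|ballot_maps c (c + j) (c + w)| = ballot j w.
Proof.
elim: j w => [|j IHj] w le_cjm; first by rewrite addn0 card_ballot_maps0 /ballot bin0.
have lt_cjm : c + j < m by lia.
have card_split w' : j <= w' -> c + w' <= p ->
    Posz #|ballot_maps c (c + j.+1) (c + w')| =
    (ballot j w' + Posz (if (j < w')%N then #|ballot_maps c (c + j).+1 (c + w').-1| else 0%N))%R.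
  move=> le_jw le_cwp; rewrite addnS -(cardsID [set h : T | h (Ordinal lt_cjm) == c + w' :> nat]).
  by rewrite card_ballot_maps_at_top ?card_ballot_maps_below_top ?ltn_add2l ?PoszD ?IHj //; lia.
elim: w => [|w IHw] le_jw le_cwp; rewrite card_split 1?ballotS //; try lia.
by case: ltnP => // lt_jw; rewrite [c + w.+1]addnS /= -addnS IHw //; lia.
Qed.

End BallotMaps.

Lemma card_ord_le n k : k < n -> #|[set j : 'I_n | j <= k]| = k.+1.
Proof.
move=> lt_kn; have widen_inj : injective (widen_ord lt_kn) by move=> i j /(congr1 val) /= /val_inj.
rewrite -[k.+1]card_ord -cardsT -(card_imset _ widen_inj); apply: eq_card => j.
rewrite inE; apply/idP/imsetP => [le_jk | [i _ ->]]; last by rewrite /= -ltnS.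
by exists (Ordinal (le_jk : j < k.+1)) => //; apply: val_inj.
Qed.

Lemma card_clade n (s : {perm 'I_n}) k : k < n -> #|clade s k| = k.+1.
Proof.
move=> lt_kn; rewrite card_imset; last exact: perm_inj.
by rewrite -(card_ord_le lt_kn); apply: eq_card => j; rewrite inE.
Qed.

Lemma mem_clade1 n k (x : 'I_n) : (x \in clade 1 k) = (x <= k).
Proof.
apply/imsetP/idP => [[j le_jk ->] | le_xk]; first by rewrite perm1; move: le_jk; rewrite inE.
by exists x; rewrite ?perm1 // inE.
Qed.

Section HistoryBounds.
Variable p : nat.
Local Notation T := {ffun 'I_p.+1 -> 'I_p.+1}.
Local Notation all_maps := (ballot_maps p 0 p.+1 p).

Lemma num_histories_le (g s : {perm 'I_p.+2}) : num_histories g s <= #|all_maps|.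
Proof.
apply/subset_leq_card/fintype.subsetP => h; rewrite inE => /andP[/forallP h_clade /nondecrP h_mono].
apply/ballot_mapsP; split=> // i; [move=> _ | by rewrite ltnNge ord_le_max].
rewrite (ord_le_max (h i)) andbT.
by have := subset_leq_card (h_clade i); rewrite !card_clade ?ltnS ?ord_le_max.
Qed.

Lemma M_le : M p.+2 <= #|all_maps|.
Proof. by apply/bigmax_leqP => gs _; exact: num_histories_le. Qed.

Section AdjacentLeafSwap.
Variables (a : nat) (lt_ap : a < p).
Let x : 'I_p.+2 := inord a.+1.
Let y : 'I_p.+2 := inord a.+2.
Local Notation fixed_at_a := [set h : T | h (inord a) == a :> nat].

Let xE : x = a.+1 :> nat. Proof. by rewrite inordK //; lia. Qed.
Let yE : y = a.+2 :> nat. Proof. by rewrite inordK //; lia. Qed.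

Lemma swap_not_same_topology : ~~ same_topology (tperm x y) 1.
Proof.
apply/forallPn; exists x; rewrite negb_imply xE /=; apply/eqP => clade_eq.
have : x \in clade 1 a.+1 by rewrite mem_clade1 xE.
rewrite -clade_eq => /imsetP[j]; rewrite inE => le_ja /esym/(canRL (tpermK x y)).
by rewrite tpermL => j_y; move: le_ja; rewrite j_y yE ltnn.
Qed.

Lemma tperm_le (i v : nat) (j : 'I_p.+2) : i <= v -> (i = a -> a < v) ->
  j <= i.+1 -> tperm x y j <= v.+1.
Proof.
move=> le_iv lt_av le_ji; case: tpermP => [j_x | j_y | _ _].
- by move: le_ji; rewrite j_x xE yE; lia.
- by move: le_ji; rewrite j_y xE yE; lia.
- lia.
Qed.

Lemma swap_histories : #|all_maps :\: fixed_at_a| <= num_histories (tperm x y) 1.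
Proof.
apply/subset_leq_card/fintype.subsetP => h /finset.setDP[/ballot_mapsP[h_mono _ h_mid _]].
rewrite inE => h_a; rewrite inE; apply/andP; split; last exact/nondecrP.
apply/forallP => i; apply/fintype.subsetP => z /imsetP[j]; rewrite inE mem_clade1 => le_ji ->.
have /andP[le_ih _] := h_mid i (ltn_ord i).
apply: tperm_le le_ji => // i_a; have -> : i = inord a by rewrite -i_a inord_val.
by move: h_a; rewrite -i_a inord_val ltn_neqAle le_ih andbT eq_sym.
Qed.

(* A map with h a = a splits into independent maps on [0, a] and on (a, p]. *)
Lemma card_fixed_at_le :
  #|all_maps :&: fixed_at_a| <= #|ballot_maps p 0 a.+1 a| * #|ballot_maps p a.+1 p.+1 p|.
Proof.
have aE : (inord a : 'I_p.+1) = a :> nat by rewrite inordK //; lia.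
pose left_part (h : T) : T := [ffun i : 'I_p.+1 => if i <= a then h i else ord_max].
pose right_part (h : T) : T := [ffun i : 'I_p.+1 => if i <= a then i else h i].
rewrite -cardsX -(card_in_imset (f := fun h => (left_part h, right_part h))); last first.
  move=> h1 h2 _ _ [eq_l eq_r]; apply/ffunP => i.
  move: (congr1 (fun f : T => f i) eq_l) (congr1 (fun f : T => f i) eq_r).
  by rewrite !ffunE; case: leqP.
apply/subset_leq_card/fintype.subsetP => hlr /imsetP[h /finset.setIP[/ballot_mapsP[h_mono _ h_mid _]]].
rewrite inE => /eqP h_a ->; rewrite finset.in_setX; apply/andP; split; apply/ballot_mapsP.
- split=> [i j le_ij|//|i /andP[_ le_ia]|i lt_ai]; rewrite !ffunE.
  + case: (leqP i a) => le_ia; case: (leqP j a) => le_ja //=; first exact: h_mono.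
      exact: ord_le_max.
    lia.
  + rewrite ltnS in le_ia; rewrite le_ia /=; have /andP[-> _] := h_mid i (ltn_ord i).
    by rewrite -h_a; apply: h_mono; rewrite aE.
  + by rewrite leqNgt lt_ai.
- split=> [i j le_ij|i lt_ia|i /andP[lt_ai _]|]; rewrite ?ffunE.
  + case: (leqP i a) => le_ia; case: (leqP j a) => le_ja //=; last exact: h_mono.
      by have /andP[+ _] := h_mid j (ltn_ord j); lia.
    lia.
  + by move: lt_ia; rewrite ltnS => ->.
  + rewrite (leqNgt i a) lt_ai /= (ord_le_max (h i)) andbT.
    by have /andP[] := h_mid i (ltn_ord i).
  + by move=> i; rewrite ltnNge ord_le_max.
Qed.

Lemma M_ge :
  #|all_maps| - #|ballot_maps p 0 a.+1 a| * #|ballot_maps p a.+1 p.+1 p| <= M p.+2.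
Proof.
have le_M : num_histories (tperm x y) 1 <= M p.+2.
  exact: (@leq_bigmax_cond _ _ (fun gs => num_histories gs.1 gs.2) (tperm x y, 1%g)
            swap_not_same_topology).
rewrite -(cardsID fixed_at_a all_maps) leq_subLR.
exact: leq_add card_fixed_at_le (leq_trans swap_histories le_M).
Qed.

End AdjacentLeafSwap.

End HistoryBounds.

Lemma mul_central_binS J : J.+1 * 'C(J.+1.*2, J.+1) = (2 * J + 1).*2 * 'C(J.*2, J).
Proof.
have sym : 'C(J.*2.+1, J.+1) = 'C(J.*2.+1, J) by rewrite -[RHS]bin_sub; [congr binomial|]; lia.
have := mul_bin_diag J.+1.*2 J; have := mul_bin_diag J.*2.+1 J.
rewrite sym doubleS /= -!muln2; set c := 'C(_.+1, J) => E1 E2.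
nia.
Qed.

Lemma central_bin_le J : 'C(J.*2, J) <= 4 ^ J.
Proof.
elim: J => [|J IHJ]; first by rewrite bin0.
rewrite -(leq_pmul2l (ltn0Sn J)) mul_central_binS expnS.
rewrite (_ : J.+1 * (4 * 4 ^ J) = 4 * J.+1 * 4 ^ J); last by ring.
by apply: leq_mul IHJ; lia.
Qed.

Lemma central_bin_sqr_ge J : 0 < J -> 16 ^ J <= 'C(J.*2, J) ^ 2 * (4 * J).
Proof.
elim: J => [//|J IHJ] _; case: J IHJ => [//|J] /(_ isT) IHJ.
rewrite -(leq_pmul2l (_ : 0 < J.+2 ^ 2)) ?expn_gt0 //.
rewrite (_ : _ * (_ * _) = (J.+2 * 'C(J.+2.*2, J.+2)) ^ 2 * (4 * J.+2)); last by ring.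
rewrite mul_central_binS expnS; set C := 'C(_, J.+1) in IHJ *.
apply: leq_trans (_ : J.+2 ^ 2 * (16 * (C ^ 2 * (4 * J.+1))) <= _).
  by rewrite !leq_mul2l IHJ !orbT.
nia.
Qed.

Lemma central_bin_mul_sqr_le q u : 0 < q + u -> u <= q.+1 -> q <= u.+1 ->
  ('C(q.*2, q) * 'C(u.*2, u)) ^ 2 * (q + u).+1 ^ 3 <=
  64 * (q.+1 * u.+1 * 'C((q + u).*2, q + u)) ^ 2.
Proof.
move=> qu_gt0 le_uq le_qu; set s := (q + u).+1.
have num_le : ('C(q.*2, q) * 'C(u.*2, u)) ^ 2 <= 16 ^ (q + u).
  have sqr_le J : 'C(J.*2, J) ^ 2 <= 16 ^ J.
    by rewrite (_ : 16 = 4 ^ 2) // -expnM mulnC expnM leq_exp2r // central_bin_le.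
  by rewrite expnD expnMn leq_mul.
have s4_le : 4 * (q + u) * s ^ 3 <= 64 * (q.+1 * u.+1) ^ 2.
  apply: leq_trans (_ : 4 * (s * s * (s * s)) <= _); first by rewrite /s; nia.
  rewrite (_ : 64 * _ = 4 * ((2 * q.+1) * (2 * u.+1) * ((2 * q.+1) * (2 * u.+1)))); last by ring.
  by rewrite leq_mul2l; apply: leq_mul; apply: leq_mul; rewrite /s; lia.
apply: leq_trans (leq_mul num_le (leqnn _)) _.
apply: leq_trans (leq_mul (central_bin_sqr_ge qu_gt0) (leqnn _)) _.
rewrite [leqRHS](_ : _ = 'C((q + u).*2, q + u) ^ 2 * (64 * (q.+1 * u.+1) ^ 2)); last by ring.
by rewrite -mulnA leq_mul2l s4_le orbT.
Qed.

Local Open Scope classical_set_scope.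
Local Open Scope ring_scope.

Lemma cvg_dist_sqr_mul_le (R : realType) (u : R^nat) (l K : R) :
  (\forall n \near \oo, `|u n - l| ^+ 2 * n%:R <= K) -> u @ \oo --> l.
Proof.
move=> u_near; apply/cvgrPdist_le => e e_gt0; near=> n.
have n_gt0 : 0 < n%:R :> R by rewrite ltr0n; near: n; exact: nbhs_infty_gt.
have K_lt : K / e ^+ 2 < n%:R by near: n; exact: nbhs_infty_gtr.
have : `|u n - l| ^+ 2 < e ^+ 2.
  rewrite -(ltr_pM2r n_gt0); apply: le_lt_trans (_ : K < _); first by near: n.
  by rewrite mulrC -ltr_pdivrMr ?exprn_gt0.
by rewrite distrC; have := normr_ge0 (u n - l); nra.
Unshelve. all: by end_near.
Qed.

Section CatalanBounds.
Variable R : realType.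

Lemma catalan_gt0 k : 0 < catalan k :> R.
Proof. by rewrite /catalan divr_gt0 // ltr0n bin_gt0 -addnn leq_addr. Qed.

Lemma ballot_diag J : (ballot J.+1 J)%:~R = catalan J.+1 :> R.
Proof.
rewrite /ballot /catalan (_ : (J + J.+1 + 1)%N = J.+1.*2); last by lia.
have := mul_bin_left J.+1.*2 J; rewrite (_ : (J.+1.*2 - J)%N = J.+2); last by lia.
set b := 'C(_, J.+1); set b' := 'C(_, J) => /(congr1 (GRing.natmul (1 : R))).
rewrite mulrzBr -!pmulrn !natrM => eq_b.
have J2_neq0 : J.+2%:R != 0 :> R by rewrite pnatr_eq0.
rewrite (_ : b'%:R = J.+1%:R * b%:R / J.+2%:R); last by apply: (mulfI J2_neq0); rewrite -eq_b; field.
by field; rewrite -natrD add2n.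
Qed.

Lemma card_ballot_maps_catalan p c J : (c + J.+1 <= p.+1)%N ->
  #|ballot_maps p c (c + J.+1) (c + J)|%:R = catalan J.+1 :> R.
Proof. by move=> le_cJp; rewrite pmulrn card_ballot_maps ?ballot_diag //; lia. Qed.

Lemma M_le_catalan p : (M p.+2)%:R <= catalan p.+1 :> R.
Proof.
have := card_ballot_maps_catalan (p := p) (c := 0) (J := p); rewrite !add0n => <- //.
by rewrite ler_nat M_le.
Qed.

Lemma catalan_sub_le_M p q : (0 < q <= p)%N ->
  catalan p.+1 - catalan q * catalan (p.+1 - q) <= (M p.+2)%:R :> R.
Proof.
case/andP => q_gt0 le_qp; have lt_qp : (q.-1 < p)%N by lia.
have := card_ballot_maps_catalan (p := p) (c := 0) (J := p); rewrite !add0n => <- //.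
have := card_ballot_maps_catalan (p := p) (c := 0) (J := q.-1); rewrite !add0n prednK // => <-; last by lia.
have := card_ballot_maps_catalan (p := p) (c := q) (J := p - q).
rewrite addnS subnKC // -subSn // => <- //.
rewrite lerBlDr -natrM -natrD ler_nat addnC -leq_subLR.
by have := M_ge lt_qp; rewrite prednK.
Qed.

Lemma catalan_mul_ratio_sqr_le q u : (0 < q + u)%N -> (u <= q.+1)%N -> (q <= u.+1)%N ->
  (catalan q * catalan u / catalan (q + u)) ^+ 2 * (q + u).+1%:R <= 64 :> R.
Proof.
move=> qu_gt0 le_uq le_qu.
have Z_gt0 : (0 < 'C((q + u).*2, q + u))%N by rewrite bin_gt0 -addnn leq_addr.
rewrite [leLHS](_ : _ = (('C(q.*2, q) * 'C(u.*2, u)) ^ 2 * (q + u).+1 ^ 3)%N%:R /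
                        ((q.+1 * u.+1 * 'C((q + u).*2, q + u)) ^ 2)%N%:R).
  rewrite ler_pdivrMr ?ltr0n ?expn_gt0 ?muln_gt0 ?Z_gt0 // -natrM ler_nat.
  exact: central_bin_mul_sqr_le.
rewrite /catalan !natrX !natrM; field.
by rewrite -natrD !nat1r !pnatr_eq0 -lt0n Z_gt0.
Qed.

Lemma M_catalan_dist_sqr_le n : (2 < n)%N ->
  `|(M n)%:R / catalan n.-1 - 1| ^+ 2 * n%:R <= 64 :> R.
Proof.
case: n => [|[|p]] //= lt_2n; set q := p.+1./2; set C := catalan p.+1.
have q_bounds : (0 < q <= p)%N by rewrite /q; lia.
have C_gt0 : 0 < C := catalan_gt0 p.+1.
have dist_le : `|(M p.+2)%:R / C - 1| <= catalan q * catalan (p.+1 - q) / C.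
  rewrite ler0_norm; last by rewrite subr_le0 ler_pdivrMr // mul1r M_le_catalan.
  rewrite opprB -[X in X - _](divff (lt0r_neq0 C_gt0)) -mulrBl ler_pM2r ?invr_gt0 //.
  by rewrite lerBlDr addrC -lerBlDr catalan_sub_le_M.
apply: le_trans (_ : (catalan q * catalan (p.+1 - q) / C) ^+ 2 * p.+2%:R <= _).
  by rewrite ler_pM2r // lerXn2r // nnegrE (le_trans _ dist_le).
have := @catalan_mul_ratio_sqr_le q (p.+1 - q); rewrite subnKC; last by lia.
by apply; lia.
Qed.

End CatalanBounds.

Theorem corollary3 (R : realType) :
  (fun n : nat => (M n)%:R / (catalan n.-1 : R)) @ \oo --> (1 : R).
Proof.
apply: (@cvg_dist_sqr_mul_le _ _ _ 64); near=> n.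
by apply: M_catalan_dist_sqr_le; near: n; exact: nbhs_infty_gt.
Unshelve. all: by end_near.
Qed.
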